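(* Let $N=\{1,\dots,n\}$ with $n\ge 2$ and $\mathcal{D}=\mathbb{R}^n_+$. A rule $R:\mathcal{D}\to\mathbb{R}^n_+$ satisfies scale invariance, downstream impartiality, and upstream invariance if and only if there exists $\alpha=(\alpha_1,\dots,\alpha_{n-1})\in[0,1]^{n-1}$ such that for each $e\in\mathcal{D}$, $$R_i(e)=\alpha_i e_i+\sum_{k<i}\frac{(1-\alpha_k)e_k}{n-k}\quad (i=1,\dots,n-1),\qquad R_n(e)=e_n+\sum_{k<n}\frac{(1-\alpha_k)e_k}{n-k}.$$
   Context: Agents $1,\dots,n$ are located along a linear river, lower index meaning more upstream; agent $i$ has river inflow $e_i\ge 0$, and $e=(e_1,\dots,e_n)\in\mathcal{D}=\mathbb{R}^n_+$. An allocation for $e$ is $x\in\mathbb{R}^n_+$ with $\sum_{i=1}^n x_i=\sum_{i=1}^n e_i$ and $\sum_{i=1}^k x_i\le\sum_{i=1}^k e_i$ for each $k=1,\dots,n-1$. A rule is a map $R:\mathcal{D}\to\mathbb{R}^n_+$ assigning to each $e$ an allocation $R(e)$ for $e$. Axioms: Scale invariance: for each $e\in\mathcal{D}$ and each $\gamma\in\mathbb{R}_+$, $R(\gamma e)=\gamma R(e)$. Upstream invariance: for each $e,e'\in\mathcal{D}$ such that $e_i<e'_i$ for some $i\in N$ and $e_j=e'_j$ for all $j\ne i$, we have $R_k(e)=R_k(e')$ for each $k<i$. Downstream impartiality: for each $e,e'\in\mathcal{D}$ such that $e_i<e'_i$ for some $i\in N$ and $e_j=e'_j$ for all $j\ne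 i$, and for each $k,l>i$ with $e_k=e_l$, we have $R_k(e')-R_k(e)=R_l(e')-R_l(e)$. *)

From mathcomp Require Import all_boot all_order all_algebra.
From mathcomp Require Import reals.
Set Implicit Arguments. Unset Strict Implicit. Unset Printing Implicit Defensive.
Import Order.TTheory GRing.Theory Num.Theory.
Local Open Scope ring_scope.

(* Agents are indexed by 'I_n, i.e. 0-based: paper agent i is (i-1 : 'I_n).
   Lower index = more upstream. *)

Definition profile (R : realType) (n : nat) := 'I_n -> R.

Definition in_domain (R : realType) (n : nat) (e : profile R n) : Prop :=
  forall i, 0 <= e i.

Definition allocation (R : realType) (n : nat) (e x : profile R n) : Prop :=
  (forall i, 0 <= x i) /\
  \sum_(i < n) x i = \sum_(i < n) e i /\
  (forall k : nat, (k < n.-1)%N ->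
     \sum_(i < n | (i <= k)%N) x i <= \sum_(i < n | (i <= k)%N) e i).

Definition is_rule (R : realType) (n : nat) (rule : profile R n -> profile R n) : Prop :=
  forall e, in_domain e -> allocation e (rule e).

Definition increase_at (R : realType) (n : nat) (e e' : profile R n) (i : 'I_n) : Prop :=
  e i < e' i /\ forall j, j != i -> e j = e' j.

Definition scale_invariance (R : realType) (n : nat) (rule : profile R n -> profile R n) : Prop :=
  forall e (g : R), in_domain e -> 0 <= g ->
    rule (fun i => g * e i) = (fun i => g * rule e i).

Definition upstream_invariance (R : realType) (n : nat) (rule : profile R n -> profile R n) : Prop :=
  forall e e' (i : 'I_n), in_domain e -> in_domain e' -> increase_at e e' i ->
    forall k : 'I_n, (k < i)%N -> rule e k = rule e' k.

Definition downstream_impartiality (R : realType) (n : nat) (rule : profile R n -> profile R n) : Prop :=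
  forall e e' (i : 'I_n), in_domain e -> in_domain e' -> increase_at e e' i ->
    forall k l : 'I_n, (i < k)%N -> (i < l)%N -> e k = e l ->
      rule e' k - rule e k = rule e' l - rule e l.

(* The rule parameterized by alpha (only alpha_1..alpha_{n-1}, i.e. 0-based
   indices < n-1, are used).  With 0-based k, the paper's (n - k) is (n - (k+1)). *)
Definition alpha_rule (R : realType) (n : nat) (alpha : 'I_n -> R) (e : profile R n) : profile R n :=
  fun i =>
    (if (i < n.-1)%N then alpha i * e i else e i)
    + \sum_(k < n | (k < i)%N) (1 - alpha k) * e k / (n - k.+1)%:R.

From mathcomp Require Import all_boot all_order all_algebra.
From mathcomp Require Import reals.
From mathcomp Require Import ring zify.
From Stdlib Require Import FunctionalExtensionality.
Set Implicit Arguments. Unset Strict Implicit. Unset Printing Implicit Defensive.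
Import Order.TTheory GRing.Theory Num.Theory.
Local Open Scope ring_scope.

(* Put alpha_k := R_k (flat_tail k), where flat_tail k has unit inflow at k and
   at every agent downstream of k, and let r := R - alpha_rule alpha.  Both
   rules allocate all the water and, by upstream invariance, their k-th
   component depends on e_1, ..., e_k only; so r sums to zero and r_k is local.
   We show r_k = 0 by induction on k.  For the last agent this follows from the
   sum.  Otherwise we may replace every inflow downstream of k by e_k, and then
   move the inflows upstream of k one at a time to those of e_k * flat_tail k,
   where r_k vanishes by scale invariance and the choice of alpha_k.  Such a
   move changes r by the same amount at all agents l >= k (downstream
   impartiality, as they share the inflow e_k), and not at all before k (by
   induction); since r sums to zero, the change is zero. *)

Lemma sumr_ord_geq (V : nmodType) (m j : nat) (x : V) :
  \sum_(i < m | (j <= i)%N) x = x *+ (m - j).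
Proof. by rewrite -sumr_const_nat big_geq_mkord. Qed.

Lemma sumr_ord_tail_const_eq0 (R : numDomainType) (n : nat) (f : 'I_n -> R) (j : 'I_n) :
  (forall k : 'I_n, (k < j)%N -> f k = 0) ->
  (forall k : 'I_n, (j <= k)%N -> f k = f j) ->
  \sum_k f k = 0 -> f j = 0.
Proof.
move=> f_head f_tail.
rewrite (bigID (fun k : 'I_n => (k < j)%N)) /= big1 => [|k /f_head //].
under eq_bigl => k do rewrite -leqNgt.
rewrite add0r (eq_bigr (fun=> f j)) // sumr_ord_geq => /eqP.
by rewrite mulrn_eq0 subn_eq0 leqNgt ltn_ord => /eqP.
Qed.

Section AlphaRule.
Variables (R : realType) (n : nat) (alpha : 'I_n -> R).

Lemma alpha_rule_sum (e : profile R n) :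
  \sum_i alpha_rule alpha e i = \sum_i e i.
Proof.
rewrite /alpha_rule big_split /=.
under [X in _ + X]eq_bigr => i _ do rewrite big_mkcond.
rewrite exchange_big /= -big_split /=; apply: eq_bigr => k _.
rewrite -big_mkcondr sumr_ord_geq.
have k_lt_n := ltn_ord k.
case: ifP => hk.
- rewrite -[_ *+ _]mulr_natr divfK ?pnatr_eq0 ?subn_eq0 -?ltnNge; first ring.
  lia.
- have -> : (n - k.+1 = 0)%N by have := negbT hk; lia.
  by rewrite mulr0n addr0.
Qed.

Lemma alpha_rule_local (e e' : profile R n) (k : 'I_n) :
  (forall j : 'I_n, (j <= k)%N -> e j = e' j) ->
  alpha_rule alpha e k = alpha_rule alpha e' k.
Proof.
move=> eq_upto; rewrite /alpha_rule eq_upto //; congr (_ + _).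
by apply: eq_bigr => j /ltnW /eq_upto ->.
Qed.

Lemma alpha_rule_increment (e e' : profile R n) (i k : 'I_n) :
  (forall j, j != i -> e j = e' j) -> (i < k)%N ->
  alpha_rule alpha e' k - alpha_rule alpha e k
    = (1 - alpha i) * (e' i - e i) / (n - i.+1)%:R.
Proof.
move=> eq_off_i i_lt_k.
have k_neq_i : k != i by rewrite neq_ltn i_lt_k orbT.
rewrite /alpha_rule eq_off_i // opprD addrACA subrr add0r -sumrB.
rewrite (bigD1 i) //= big1 ?addr0 => [|j /andP[_ /eq_off_i ->]]; last exact: subrr.
by rewrite -!mulrA -mulrBr -mulrBl.
Qed.

Lemma alpha_rule_scale (e : profile R n) (g : R) (i : 'I_n) :
  alpha_rule alpha (fun j => g * e j) i = g * alpha_rule alpha e i.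
Proof.
rewrite /alpha_rule mulrDr mulr_sumr; congr (_ + _).
  by case: ifP => _; rewrite // mulrCA.
by apply: eq_bigr => k _; rewrite !mulrA [_ * g]mulrC.
Qed.

End AlphaRule.

Lemma profile_eq_off (R : realType) (n : nat) (x y : profile R n) (i : 'I_n) :
  (forall j, j != i -> x j = y j) -> x i = y i -> x = y.
Proof.
move=> eq_off eq_i; apply: functional_extensionality => j.
by case: (eqVneq j i) => [->|/eq_off].
Qed.

Section ProfilePaths.
Variables (R : realType) (n : nat) (T : Type) (f : profile R n -> T).
Variables (S : pred 'I_n) (e0 : profile R n).
Hypothesis f_increase : forall (x y : profile R n) (i : 'I_n),
  in_domain x -> in_domain y -> S i -> increase_at x y i ->
  (forall j, ~~ S j -> x j = e0 j) -> f x = f y.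

Lemma congr_single_change (x y : profile R n) (i : 'I_n) :
  in_domain x -> in_domain y -> (forall j, j != i -> x j = y j) ->
  (forall j, ~~ S j -> x j = e0 j) -> (forall j, ~~ S j -> y j = e0 j) ->
  f x = f y.
Proof.
move=> x_dom y_dom eq_off x_out y_out.
have [Si|nSi] := boolP (S i); last by rewrite (profile_eq_off eq_off) // x_out ?y_out.
case: (ltgtP (x i) (y i)) => [xy|yx|xy]; last by rewrite (profile_eq_off eq_off).
- by apply: (f_increase _ _ Si).
- by symmetry; apply: (f_increase _ _ Si) => //; split=> // j /eq_off.
Qed.

Lemma congr_along_path (e : profile R n) :
  in_domain e0 -> in_domain e -> (forall j, ~~ S j -> e j = e0 j) -> f e0 = f e.
Proof.
move=> e0_dom e_dom e_out.
pose P d : profile R n := fun j => if (j < d)%N then e j else e0 j.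
have P_dom d : in_domain (P d) by move=> j; rewrite /P; case: ifP.
have P_out d j : ~~ S j -> P d j = e0 j by rewrite /P; case: ifP => // _ /e_out.
have f_P d : f e0 = f (P d).
  elim: d => [|d ->]; first by congr (f _); apply: functional_extensionality => j.
  have [d_lt_n|n_le_d] := ltnP d n.
    apply: (congr_single_change (i := Ordinal d_lt_n) (P_dom d) (P_dom d.+1))
      (P_out d) (P_out d.+1) => j j_neq_d.
    have j_neq_d' : (j == d :> nat) = false by exact: contraNF j_neq_d.
    by rewrite /P ltnS [(j <= d)%N]leq_eqVlt j_neq_d'.
  congr (f _); apply: functional_extensionality => j.
  by rewrite /P !(leq_trans (ltn_ord j)) // leqW.
rewrite (f_P n); congr (f _); apply: functional_extensionality => j.
by rewrite /P ltn_ord.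
Qed.

End ProfilePaths.

Definition flat_tail (R : realType) (n : nat) (j : 'I_n) : profile R n :=
  fun i => if (j <= i)%N then 1 else 0.

Definition alpha_of_rule (R : realType) (n : nat)
    (rule : profile R n -> profile R n) : 'I_n -> R :=
  fun k => rule (flat_tail R k) k.

Lemma flat_tail_in_domain (R : realType) (n : nat) (j : 'I_n) :
  in_domain (flat_tail R j).
Proof. by move=> i; rewrite /flat_tail; case: ifP. Qed.

Lemma alpha_of_rule_bounds (R : realType) (n : nat) (rule : profile R n -> profile R n)
    (k : 'I_n) :
  is_rule rule -> (k < n.-1)%N -> 0 <= alpha_of_rule rule k <= 1.
Proof.
move=> rule_alloc k_lt_last.
have [x_ge0 [_ prefix]] := rule_alloc _ (flat_tail_in_domain R k).
have tail_prefix : \sum_(i < n | (i <= k)%N) flat_tail R k i = 1.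
  rewrite (bigD1 k) //= big1 ?addr0 => [|i /andP[i_le_k i_neq_k]].
    by rewrite /flat_tail leqnn.
  by rewrite /flat_tail ifN // -ltnNge ltn_neqAle i_le_k andbT; exact: i_neq_k.
rewrite /alpha_of_rule x_ge0 -tail_prefix /=; apply: le_trans (prefix k k_lt_last).
by rewrite (bigD1 k) //= lerDl sumr_ge0.
Qed.

Section Characterization.
Variables (R : realType) (n : nat) (rule : profile R n -> profile R n).
Hypotheses (rule_alloc : is_rule rule) (rule_scale : scale_invariance rule).
Hypotheses (rule_impartial : downstream_impartiality rule).
Hypothesis (rule_upstream : upstream_invariance rule).

Local Notation alpha := (alpha_of_rule rule).

Lemma rule_local (e e' : profile R n) (k : 'I_n) :
  in_domain e -> in_domain e' -> (forall j : 'I_n, (j <= k)%N -> e j = e' j) ->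
  rule e k = rule e' k.
Proof.
move=> e_dom e'_dom eq_upto.
apply: (@congr_along_path _ _ _ (rule^~ k) (fun i => (k < i)%N)) => //.
  move=> x y i x_dom y_dom k_lt_i xy _.
  exact: (rule_upstream x_dom y_dom xy k_lt_i).
by move=> j; rewrite -leqNgt => /eq_upto.
Qed.

Let residual e j := rule e j - alpha_rule alpha e j.

Lemma residual_sum (e : profile R n) : in_domain e -> \sum_j residual e j = 0.
Proof.
move=> e_dom; have [_ [sum_rule _]] := rule_alloc e_dom.
by rewrite sumrB alpha_rule_sum sum_rule subrr.
Qed.

Lemma residual_local (e e' : profile R n) (k : 'I_n) :
  in_domain e -> in_domain e' -> (forall j : 'I_n, (j <= k)%N -> e j = e' j) ->
  residual e k = residual e' k.
Proof.
by move=> e_dom e'_dom eq_upto; rewrite /residual (rule_local e_dom e'_dom eq_upto)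
  (alpha_rule_local _ eq_upto).
Qed.

Lemma residual_scale (e : profile R n) (g : R) (j : 'I_n) :
  in_domain e -> 0 <= g -> residual (fun i => g * e i) j = g * residual e j.
Proof.
by move=> e_dom g_ge0; rewrite /residual rule_scale // alpha_rule_scale mulrBr.
Qed.

Lemma residual_flat_tail (j : 'I_n) : (j < n.-1)%N -> residual (flat_tail R j) j = 0.
Proof.
move=> j_lt_last; rewrite /residual /alpha_rule j_lt_last big1 => [|k k_lt_j].
  by rewrite /flat_tail leqnn mulr1 addr0 subrr.
by rewrite /flat_tail leqNgt k_lt_j !(mulr0, mul0r).
Qed.

Section Induction.
Variable j : 'I_n.
Hypothesis residual_upstream : forall k : 'I_n, (k < j)%N ->
  forall e, in_domain e -> residual e k = 0.

Lemma residual_increase (x y : profile R n) (i : 'I_n) :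
  in_domain x -> in_domain y -> (i < j)%N -> increase_at x y i ->
  (forall k : 'I_n, (j <= k)%N -> x k = x j) -> residual x j = residual y j.
Proof.
move=> x_dom y_dom i_lt_j xy x_flat; have [_ eq_off] := xy.
apply/eqP; rewrite eq_sym -subr_eq0; apply/eqP.
pose change k := residual y k - residual x k.
have change_split k : change k
    = (rule y k - rule x k) - (alpha_rule alpha y k - alpha_rule alpha x k).
  by rewrite /change /residual; ring.
apply: (@sumr_ord_tail_const_eq0 _ _ change).
- by move=> k k_lt_j; rewrite /change !residual_upstream ?subrr.
- move=> k j_le_k; have i_lt_k := leq_trans i_lt_j j_le_k.
  rewrite !change_split (rule_impartial x_dom y_dom xy i_lt_k i_lt_j (x_flat k j_le_k)).
  by rewrite !(alpha_rule_increment _ eq_off).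
- by rewrite sumrB !residual_sum ?subrr.
Qed.

Lemma residual_eq0_at (e : profile R n) : in_domain e -> residual e j = 0.
Proof.
move=> e_dom; have j_lt_n := ltn_ord j.
have [j_lt_last|last_le_j] := ltnP j n.-1; last first.
  have := residual_sum e_dom; rewrite (bigD1 j) //= big1 ?addr0 // => k k_neq_j.
  apply: residual_upstream => //; rewrite ltn_neqAle val_eqE k_neq_j /=.
  by have := ltn_ord k; lia.
pose E : profile R n := fun i => if (i < j)%N then e i else e j.
have E_dom : in_domain E by move=> i; rewrite /E; case: ifP.
have tail_dom : in_domain (fun i => e j * flat_tail R j i).
  by move=> i; rewrite mulr_ge0 ?flat_tail_in_domain.
have -> : residual e j = residual E j.
  apply: residual_local => // i i_le_j; rewrite /E.
  have [//|j_le_i] := ltnP; congr e; apply: val_inj; apply/eqP.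
  by rewrite eqn_leq i_le_j j_le_i.
rewrite (@congr_along_path _ _ _ (residual^~ j) (fun i => (i < j)%N) E _
    (fun i => e j * flat_tail R j i)) //.
- rewrite (residual_scale _ (flat_tail_in_domain R j) (e_dom j)).
  by rewrite residual_flat_tail ?mulr0.
- move=> x y i x_dom y_dom i_lt_j xy x_out.
  apply: (residual_increase x_dom y_dom i_lt_j xy) => k j_le_k.
  by rewrite !x_out -?leqNgt // /E !ltnNge j_le_k leqnn.
- move=> i; rewrite -leqNgt => j_le_i.
  by rewrite /flat_tail /E j_le_i ltnNge j_le_i mulr1.
Qed.

End Induction.

Lemma residual_eq0 (e : profile R n) (j : 'I_n) : in_domain e -> residual e j = 0.
Proof.
suff below m : forall k : 'I_n, (k < m)%N -> forall e, in_domain e -> residual e k = 0.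
  exact: (below j.+1).
elim: m => [//|m IHm] k k_lt_m; apply: residual_eq0_at => i i_lt_k.
exact/IHm/(leq_trans i_lt_k).
Qed.

Lemma rule_eq_alpha_rule (e : profile R n) : in_domain e -> rule e = alpha_rule alpha e.
Proof.
move=> e_dom; apply: functional_extensionality => j.
by apply/eqP; rewrite -subr_eq0; apply/eqP; exact: residual_eq0.
Qed.

End Characterization.

Theorem theorem4 (R : realType) (n : nat) (rule : profile R n -> profile R n) :
  (2 <= n)%N -> is_rule rule ->
  (scale_invariance rule /\ downstream_impartiality rule /\ upstream_invariance rule
   <->
   exists alpha : 'I_n -> R,
     (forall k : 'I_n, (k < n.-1)%N -> 0 <= alpha k <= 1) /\
     forall e, in_domain e -> rule e = alpha_rule alpha e).
Proof.
move=> _ rule_alloc; split.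
- case=> rule_scale [rule_impartial rule_upstream].
  exists (alpha_of_rule rule); split=> [k|e]; first exact: alpha_of_rule_bounds.
  exact: rule_eq_alpha_rule.
- case=> alpha [_ rule_eq]; split; [|split].
  + move=> e g e_dom g_ge0.
    have ge_dom : in_domain (fun i => g * e i) by move=> i; rewrite mulr_ge0.
    rewrite !rule_eq //; apply: functional_extensionality => i.
    exact: alpha_rule_scale.
  + move=> e e' i e_dom e'_dom [_ eq_off] k l i_lt_k i_lt_l _.
    by rewrite !rule_eq // !(alpha_rule_increment _ eq_off).
  + move=> e e' i e_dom e'_dom [_ eq_off] k k_lt_i.
    rewrite !rule_eq //; apply: alpha_rule_local => j j_le_k; apply: eq_off.
    by rewrite neq_ltn (leq_ltn_trans j_le_k k_lt_i).
Qed.
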